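(* Let $\mathcal{X}$ and $\mathcal{Y}$ be finite sets, $g:\mathcal{X}\times\mathcal{Y}\to\mathbb{R}_{>0}$ a strictly positive function, and $h:\mathcal{Y}\to\mathbb{R}_{\ge0}$ a non-negative function. Then, writing $X\sim p$ and $Y\sim q$ in all expectations, \[ \max_{q\in\Delta(\mathcal{Y})}\min_{x\in\mathcal{X}}\mathbb{E}\frac{g(x,Y)}{h(Y)} =\min_{p\in\Delta(\mathcal{X})}\max_{y\in\mathcal{Y}}\frac{\mathbb{E}\,g(X,y)}{h(y)} =\max_{q\in\Delta(\mathcal{Y})}\min_{p\in\Delta(\mathcal{X})}\frac{\mathbb{E}\,g(X,Y)}{\mathbb{E}\,h(Y)} =\min_{p\in\Delta(\mathcal{X})}\max_{q\in\Delta(\mathcal{Y})}\frac{\mathbb{E}\,g(X,Y)}{\mathbb{E}\,h(Y)}. \]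
   Context: For a finite set $U$, $\Delta(U)$ denotes the set of all probability distributions on $U$; $X$ and $Y$ are independent. *)

From HB Require Import structures.
From mathcomp Require Import all_boot all_order all_algebra.
From mathcomp Require Import boolp classical_sets reals constructive_ereal ereal.
Set Implicit Arguments. Unset Strict Implicit. Unset Printing Implicit Defensive.
Import Order.TTheory GRing.Theory Num.Theory.
Local Open Scope classical_set_scope.
Local Open Scope ring_scope.

Definition dist (R : realType) (U : finType) : set (U -> R) :=
  [set p | (forall u, 0 <= p u) /\ \sum_(u : U) p u = 1].

(* a / b in the extended reals, with the convention a / 0 = +oo
   (only used with a > 0, b >= 0). *)
Definition eratio (R : realType) (a b : R) : \bar R :=
  if b == 0 then +oo%E else (a / b)%:E.

Local Open Scope ereal_scope.

Definition is_min (R : realType) (A : Type) (S : set A) (F : A -> \bar R) (v : \bar R) :=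
  (exists2 a, S a & F a = v) /\ (forall a, S a -> v <= F a).
Definition is_max (R : realType) (A : Type) (S : set A) (F : A -> \bar R) (v : \bar R) :=
  (exists2 a, S a & F a = v) /\ (forall a, S a -> F a <= v).

(* max_{a in S} min_{b in T} F a b = v  (all max/min attained) *)
Definition maxmin (R : realType) (A B : Type) (S : set A) (T : set B)
  (F : A -> B -> \bar R) (v : \bar R) :=
  (forall a, S a -> is_min T (F a) (ereal_inf (F a @` T))) /\
  is_max S (fun a => ereal_inf (F a @` T)) v.

(* min_{a in S} max_{b in T} F a b = v  (all max/min attained) *)
Definition minmax (R : realType) (A B : Type) (S : set A) (T : set B)
  (F : A -> B -> \bar R) (v : \bar R) :=
  (forall a, S a -> is_max T (F a) (ereal_sup (F a @` T))) /\
  is_min S (fun a => ereal_sup (F a @` T)) v.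

From HB Require Import structures.
From mathcomp Require Import all_boot all_order all_algebra.
From mathcomp Require Import boolp classical_sets reals constructive_ereal ereal.
From mathcomp Require Import lra.
Import Order.TTheory GRing.Theory Num.Theory.
Set Implicit Arguments. Unset Strict Implicit. Unset Printing Implicit Defensive.
Local Open Scope classical_set_scope.
Local Open Scope ring_scope.

(* If [h] vanishes at some [y], the point mass at [y] makes every ratio
   [+oo], and all four values are [+oo].  Otherwise all four are the value of
   the finite matrix game with payoff [G x y = g x y / h y]: the first two are
   its max-min and min-max against pure strategies, and in the last two an
   optimal [p] for [G] gives [E g <= v E h] for every [q], while an optimal
   [q] for [G], reweighted by [1 / h], gives the reverse bound for every [p].
   Von Neumann's minimax theorem for [G] follows from Ville's theorem of the
   alternative, proved by eliminating one row at a time (Fourier-Motzkin). *)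

Definition dirac {R : pzSemiRingType} {U : finType} (u : U) : U -> R :=
  fun z => (z == u)%:R.

Lemma dirac_neq (R : pzSemiRingType) (U : finType) (u z : U) :
  z != u -> dirac u z = 0 :> R.
Proof. by rewrite /dirac => /negbTE ->. Qed.

Lemma sum_diracM (R : pzSemiRingType) (U : finType) (u : U) (f : U -> R) :
  \sum_z dirac u z * f z = f u.
Proof.
rewrite (bigD1 u) //= big1 => [|z z_neq]; last by rewrite dirac_neq ?mul0r.
by rewrite /dirac eqxx mul1r addr0.
Qed.

Lemma sum_Mdirac (R : pzSemiRingType) (U : finType) (u : U) (f : U -> R) :
  \sum_z f z * dirac u z = f u.
Proof.
rewrite (bigD1 u) //= big1 => [|z z_neq]; last by rewrite dirac_neq ?mulr0.
by rewrite /dirac eqxx mulr1 addr0.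
Qed.

Lemma sum_dirac (R : pzSemiRingType) (U : finType) (u : U) :
  \sum_z dirac u z = 1 :> R.
Proof.
by rewrite -[RHS](sum_diracM u (fun=> 1)); apply: eq_bigr => z _; rewrite mulr1.
Qed.

Lemma sumM_exchange (R : comPzSemiRingType) (X Y : finType)
    (p : X -> R) (q : Y -> R) (G : X -> Y -> R) :
  \sum_x p x * \sum_y q y * G x y = \sum_y q y * \sum_x p x * G x y.
Proof.
under eq_bigr do rewrite mulr_sumr.
rewrite exchange_big /=; apply: eq_bigr => y _.
by rewrite mulr_sumr; apply: eq_bigr => x _; rewrite mulrCA.
Qed.

Lemma sum_pairM_l (R : comPzSemiRingType) (X Y : finType)
    (p : X -> R) (q : Y -> R) (G : X -> Y -> R) :
  \sum_x \sum_y p x * q y * G x y = \sum_x p x * \sum_y q y * G x y.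
Proof.
by apply: eq_bigr => x _; rewrite mulr_sumr; apply: eq_bigr => y _; rewrite mulrA.
Qed.

Lemma sum_pairM_r (R : comPzSemiRingType) (X Y : finType)
    (p : X -> R) (q : Y -> R) (G : X -> Y -> R) :
  \sum_x \sum_y p x * q y * G x y = \sum_y q y * \sum_x p x * G x y.
Proof. by rewrite sum_pairM_l sumM_exchange. Qed.

Lemma exists_argmin d (T : orderType d) (I : finType) (i0 : I) (F : I -> T) :
  exists i, forall j, (F i <= F j)%O.
Proof.
case: (arg_minP F (P := predT) (i0 := i0) isT) => i _ Fi.
by exists i => j; exact: Fi.
Qed.

Lemma exists_argmax d (T : orderType d) (I : finType) (i0 : I) (F : I -> T) :
  exists i, forall j, (F j <= F i)%O.
Proof.
case: (arg_maxP F (P := predT) (i0 := i0) isT) => i _ Fi.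
by exists i => j; exact: Fi.
Qed.

Section Distributions.
Variables (R : realType) (U : finType).
Implicit Types (p w F : U -> R) (c m : R).

Lemma dirac_dist (u : U) : @dist R U (dirac u).
Proof. by split=> [z|]; rewrite ?ler0n ?sum_dirac. Qed.

Lemma dist_avg_le p F m : dist p -> (forall u, F u <= m) ->
  \sum_u p u * F u <= m.
Proof.
move=> [p_ge0 p_sum1] F_le; rewrite -[m]mul1r -p_sum1 mulr_suml.
by apply: ler_sum => u _; exact: ler_wpM2l.
Qed.

Lemma le_dist_avg p F m : dist p -> (forall u, m <= F u) ->
  m <= \sum_u p u * F u.
Proof.
move=> [p_ge0 p_sum1] F_ge; rewrite -[m]mul1r -p_sum1 mulr_suml.
by apply: ler_sum => u _; exact: ler_wpM2l.
Qed.

Lemma dist_avgBr p F c : dist p ->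
  \sum_u p u * (F u - c) = \sum_u p u * F u - c.
Proof.
move=> [_ p_sum1]; under eq_bigr do rewrite mulrBr.
by rewrite sumrB -mulr_suml p_sum1 mul1r.
Qed.

Lemma dist_avgBl p F c : dist p ->
  \sum_u p u * (c - F u) = c - \sum_u p u * F u.
Proof.
move=> [_ p_sum1]; under eq_bigr do rewrite mulrBr.
by rewrite sumrB -mulr_suml p_sum1 mul1r.
Qed.

Lemma dist_avg_gt0 p F : dist p -> (forall u, 0 < F u) ->
  0 < \sum_u p u * F u.
Proof.
move=> [p_ge0 p_sum1] F_gt0.
have terms_ge0 u : 0 <= p u * F u by rewrite mulr_ge0 // ltW.
rewrite lt_def sumr_ge0 // andbT psumr_neq0 //.
have : \sum_u p u != 0 by rewrite p_sum1 oner_neq0.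
rewrite psumr_neq0 // => /hasP[u _ p_gt0].
by apply/hasP; exists u; rewrite ?mem_index_enum ?mulr_gt0.
Qed.

Lemma sum_gt0_of_avg_gt0 w F : (forall u, 0 <= w u) ->
  0 < \sum_u w u * F u -> 0 < \sum_u w u.
Proof.
move=> w_ge0 avg_gt0; rewrite lt_def sumr_ge0 // andbT.
apply: contraTneq avg_gt0 => w_sum0.
have w0 := psumr_eq0P (fun u _ => w_ge0 u) w_sum0.
by rewrite big1 ?ltxx // => u _; rewrite w0 ?mul0r.
Qed.

Definition normalize w : U -> R := fun u => w u / \sum_v w v.

Lemma normalize_dist w : (forall u, 0 <= w u) -> 0 < \sum_u w u ->
  dist (normalize w).
Proof.
move=> w_ge0 w_sum_gt0; split=> [u|]; first by rewrite divr_ge0 // ltW.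
by rewrite -mulr_suml divff ?gt_eqF.
Qed.

Lemma sum_normalizeM w F :
  \sum_u normalize w u * F u = (\sum_u w u * F u) / \sum_u w u.
Proof. by rewrite mulr_suml; apply: eq_bigr => u _; rewrite mulrAC. Qed.

End Distributions.

(** * Ville's theorem of the alternative *)

Lemma fm_multiplier (R : realFieldType) (Y : finType) (a b : Y -> R) :
  (forall y, 0 <= a y -> b y <= 0) ->
  (forall y y', 0 < a y -> a y' < 0 -> a y * b y' <= a y' * b y) ->
  exists2 t, 0 <= t & forall y, b y + t * a y <= 0.
Proof.
move=> b_le0 b_pair; pose t := \big[Num.max/0]_(y | a y < 0) (b y / - a y).
exists t => [|y]; first exact: bigmax_ge_id.
case: (ltgtP (a y) 0) => ay.
- have : b y / - a y <= t by exact: le_bigmax_cond.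
  rewrite ler_pdivrMr ?oppr_gt0 //; lra.
- have : t <= - b y / a y.
    apply: bigmax_le => [|y' ay'].
      by rewrite divr_ge0 ?oppr_ge0 ?b_le0 ?ltW.
    rewrite ler_pdivrMr ?oppr_gt0 // mulrAC ler_pdivlMr //.
    have := b_pair y y' ay ay'; lra.
  rewrite ler_pdivlMr //; lra.
- by rewrite ay mulr0 addr0 b_le0 // ay.
Qed.

Lemma exists_scale_gt0 (R : realFieldType) (X : finType) (T : {set X})
    (s m : X -> R) :
  (forall x, x \in T -> 0 < s x) ->
  exists2 c, 0 <= c & forall x, x \in T -> 0 < c * s x + m x.
Proof.
move=> s_gt0; pose c := \big[Num.max/0]_(x in T) ((1 - m x) / s x).
exists c => [|x xT]; first exact: bigmax_ge_id.
have : (1 - m x) / s x <= c by exact: le_bigmax_cond.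
rewrite ler_pdivrMr ?s_gt0 //; lra.
Qed.

Definition strict_solution (R : realFieldType) (X Y : finType) (S : {set X})
    (M : X -> Y -> R) (q : Y -> R) :=
  (forall y, 0 <= q y) /\ forall x, x \in S -> 0 < \sum_y q y * M x y.

Definition dual_certificate (R : realFieldType) (X Y : finType) (S : {set X})
    (M : X -> Y -> R) (p : X -> R) :=
  [/\ forall x, 0 <= p x, forall x, x \notin S -> p x = 0, 0 < \sum_x p x
    & forall y, \sum_x p x * M x y <= 0].

Section FourierMotzkin.
Variables (R : realFieldType) (X Y : finType) (M : X -> Y -> R) (x0 : X).

(* Fourier-Motzkin elimination of row [x0]: the new columns are the columns
   [y] with [M x0 y >= 0] and, whenever [M x0 y > 0 > M x0 y'], the
   nonnegative combination of columns [y] and [y'] vanishing on row [x0];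
   the other indices give zero columns. *)
Definition fm_comb (k : Y + Y * Y) (s : Y -> R) : R :=
  match k with
  | inl y => (0 <= M x0 y)%R%:R * s y
  | inr (y, y') =>
      ((0 < M x0 y) && (M x0 y' < 0))%R%:R * (M x0 y * s y' - M x0 y' * s y)
  end.

Definition fm_mx (x : X) (k : Y + Y * Y) : R := fm_comb k (M x).

Definition fm_col (k : Y + Y * Y) (z : Y) : R := fm_comb k (dirac^~ z).

Lemma fm_mx_pivot_ge0 k : 0 <= fm_mx x0 k.
Proof.
case: k => [y|[y y']] /=.
  by case: (boolP (0 <= M x0 y)); rewrite ?mul1r ?mul0r.
by rewrite [_ * M x0 y]mulrC subrr mulr0.
Qed.

Lemma fm_col_ge0 k z : 0 <= fm_col k z.
Proof.
rewrite /fm_col /dirac; case: k => [y|[y y']] /=; first by rewrite mulr_ge0.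
case: (boolP (_ && _)) => [/andP[ay ay']|_]; rewrite ?mul0r // mul1r subr_ge0.
apply: le_trans (_ : _ <= 0) _.
  by apply: mulr_le0_ge0; [exact: ltW | exact: ler0n].
by apply: mulr_ge0; [exact: ltW | exact: ler0n].
Qed.

Lemma fm_comb_sum (I : finType) (p : I -> R) (F : I -> Y -> R) k :
  \sum_i p i * fm_comb k (F i) = fm_comb k (fun y => \sum_i p i * F i y).
Proof.
case: k => [y|[y y']] /=.
  by rewrite mulr_sumr; apply: eq_bigr => i _; rewrite mulrCA.
rewrite mulrBr !mulr_sumr -sumrB; apply: eq_bigr => i _.
rewrite -mulrBr mulrCA; congr (_ * _).
by rewrite mulrBr (mulrCA (p i)) (mulrCA (p i)).
Qed.

Lemma fm_combE k s : fm_comb k s = \sum_z s z * fm_col k z.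
Proof.
rewrite fm_comb_sum; congr fm_comb; apply: funext => y.
by rewrite sum_Mdirac.
Qed.

Variable S : {set X}.

Lemma lift_strict_solution y1 q' : 0 < M x0 y1 ->
  strict_solution (S :\ x0) fm_mx q' -> exists q, strict_solution S M q.
Proof.
move=> pos_y1 [q'_ge0 q'_pos].
pose q0 z := \sum_k q' k * fm_col k z.
have q0_ge0 z : 0 <= q0 z.
  by rewrite sumr_ge0 // => k _; rewrite mulr_ge0 ?fm_col_ge0.
have q0E x : \sum_z q0 z * M x z = \sum_k q' k * fm_mx x k.
  under [RHS]eq_bigr do rewrite /fm_mx fm_combE mulr_sumr.
  rewrite exchange_big /=; apply: eq_bigr => z _; rewrite mulr_suml.
  by apply: eq_bigr => k _; rewrite mulrCA mulrC.
have q0_pos x : x \in S :\ x0 -> 0 < \sum_z q0 z * M x z.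
  by rewrite q0E; exact: q'_pos.
have [c c_ge0 c_pos] := exists_scale_gt0 (fun x => M x y1) q0_pos.
exists (fun z => c * q0 z + dirac y1 z); split=> [z|x xS].
  by rewrite addr_ge0 ?ler0n // mulr_ge0.
have -> : \sum_z (c * q0 z + dirac y1 z) * M x z =
          c * (\sum_z q0 z * M x z) + M x y1.
  under eq_bigr do rewrite mulrDl -mulrA.
  by rewrite big_split /= -mulr_sumr sum_diracM.
have [->|nx] := eqVneq x x0; last by apply: c_pos; rewrite !inE nx.
apply: ltr_wpDl pos_y1; rewrite mulr_ge0 // q0E sumr_ge0 // => k _.
by rewrite mulr_ge0 ?fm_mx_pivot_ge0.
Qed.

Hypothesis x0S : x0 \in S.

Lemma lift_dual_certificate p' :
  dual_certificate (S :\ x0) fm_mx p' -> exists p, dual_certificate S M p.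
Proof.
case=> p'_ge0 p'_out p'_pos p'_le0.
pose s y := \sum_x p' x * M x y.
have s_comb_le0 k : fm_comb k s <= 0 by rewrite -fm_comb_sum; exact: p'_le0.
have s_le0 y : 0 <= M x0 y -> s y <= 0.
  by move=> ay; have := s_comb_le0 (inl y); rewrite /= ay mul1r.
have s_pair y y' : 0 < M x0 y -> M x0 y' < 0 -> M x0 y * s y' <= M x0 y' * s y.
  move=> ay ay'; have := s_comb_le0 (inr (y, y')).
  by rewrite /= ay ay' mul1r subr_le0.
have [t t_ge0 st_le0] := fm_multiplier s_le0 s_pair.
exists (fun x => p' x + t * dirac x0 x); split=> [x|x xS||y].
- by rewrite addr_ge0 // mulr_ge0 ?ler0n.
- have nx : x != x0 by apply: contraNneq xS => ->.
  by rewrite p'_out ?dirac_neq ?mulr0 ?addr0 // !inE negb_and xS orbT.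
- by rewrite big_split /= -mulr_sumr sum_dirac mulr1 ltr_wpDr.
- under eq_bigr do rewrite mulrDl mulrAC.
  by rewrite big_split /= sum_Mdirac st_le0.
Qed.

End FourierMotzkin.

Lemma ville_alternative (R : realFieldType) (X Y : finType) (S : {set X})
    (M : X -> Y -> R) :
  (exists q, strict_solution S M q) \/ (exists p, dual_certificate S M p).
Proof.
have [n] := ubnP #|S|; elim: n => // n IH in Y S M *; rewrite ltnS => card_S.
have [->|[x0 x0S]] := set_0Vmem S.
  by left; exists (fun=> 0); split=> [y|x]; rewrite ?inE.
have [[y1 pos_y1]|row_le0] := pselect (exists y, 0 < M x0 y); last first.
  right; exists (dirac x0); split=> [x|x xS||y]; rewrite ?ler0n ?sum_dirac //.
    by rewrite dirac_neq //; apply: contraNneq xS => ->.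
  by rewrite sum_diracM leNgt; apply/negP => ?; apply: row_le0; exists y.
have card_D1 : (#|S :\ x0| < n)%N.
  by move: card_S; rewrite (cardsD1 x0 S) x0S.
case: (IH _ _ (fm_mx M x0) card_D1) => [[q' sol]|[p' cert]].
  by left; exact: lift_strict_solution pos_y1 sol.
by right; exact: (lift_dual_certificate x0S cert).
Qed.

Lemma alternative_dist (R : realType) (X Y : finType) (M : X -> Y -> R) :
  (0 < #|X|)%N ->
  (exists2 q, dist q & forall x, 0 < \sum_y q y * M x y) \/
  (exists2 p, dist p & forall y, \sum_x p x * M x y <= 0).
Proof.
move=> /card_gt0P[x0 _].
have [[q [q_ge0 q_pos]]|[p [p_ge0 _ p_pos p_le0]]] :=
  ville_alternative [set: X] M.
- have q_sum_gt0 := sum_gt0_of_avg_gt0 q_ge0 (q_pos x0 (finset.in_setT x0)).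
  left; exists (normalize q); first exact: normalize_dist.
  by move=> x; rewrite sum_normalizeM divr_gt0 ?q_pos ?finset.in_setT.
- right; exists (normalize p); first exact: normalize_dist.
  by move=> y; rewrite sum_normalizeM pmulr_lle0 ?invr_gt0.
Qed.

(** * Von Neumann's minimax theorem *)

Section MatrixGame.
Variables (R : realType) (X Y : finType) (G : X -> Y -> R).
Hypotheses (hX : (0 < #|X|)%N) (hY : (0 < #|Y|)%N).

Definition guaranteed_payoff : set R :=
  [set w | exists2 q, dist q & forall x, w <= \sum_y q y * G x y].

Lemma guaranteed_payoff_has_sup : has_sup guaranteed_payoff.
Proof.
have [x0 _] := card_gt0P hX; have [y0 _] := card_gt0P hY.
have [xm xm_min] := exists_argmin x0 (fun x => G x y0).
have [ym ym_max] := exists_argmax y0 (G x0).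
split.
  exists (G xm y0), (dirac y0); first exact: dirac_dist.
  by move=> x; rewrite sum_diracM.
exists (G x0 ym) => w [q q_dist q_ge].
exact: le_trans (q_ge x0) (dist_avg_le q_dist _).
Qed.

Lemma exists_optimal_maximizer :
  exists2 q, dist q & forall x, sup guaranteed_payoff <= \sum_y q y * G x y.
Proof.
have [y0 _] := card_gt0P hY.
have [[p p_dist p_pos]|[q q_dist q_le0]] :=
  alternative_dist (fun y x => sup guaranteed_payoff - G x y) hY; last first.
  by exists q => // x; have := q_le0 x; rewrite dist_avgBl // subr_le0.
have [ym ym_max] := exists_argmax y0 (fun y => \sum_x p x * G x y).
have : sup guaranteed_payoff <= \sum_x p x * G x ym.
  apply: ge_sup => [|w [q q_dist q_ge]]; first exact: guaranteed_payoff_has_sup.1.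
  apply: le_trans (le_dist_avg p_dist q_ge) _.
  by rewrite sumM_exchange; exact: dist_avg_le.
by rewrite leNgt -subr_gt0 -dist_avgBl ?p_pos.
Qed.

Lemma exists_optimal_minimizer :
  exists2 p, dist p & forall y, \sum_x p x * G x y <= sup guaranteed_payoff.
Proof.
have [x0 _] := card_gt0P hX.
have [[q q_dist q_pos]|[p p_dist p_le0]] :=
  alternative_dist (fun x y => G x y - sup guaranteed_payoff) hX; last first.
  by exists p => // y; have := p_le0 y; rewrite dist_avgBr // subr_le0.
have [xm xm_min] := exists_argmin x0 (fun x => \sum_y q y * G x y).
have : \sum_y q y * G xm y <= sup guaranteed_payoff.
  by apply: sup_upper_bound; [exact: guaranteed_payoff_has_sup | exists q].
by rewrite leNgt -subr_gt0 -dist_avgBr ?q_pos.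
Qed.

Theorem matrix_game_saddle : exists p q v,
  [/\ dist p, dist q, forall x, v <= \sum_y q y * G x y
    & forall y, \sum_x p x * G x y <= v].
Proof.
have [p p_dist p_le] := exists_optimal_minimizer.
have [q q_dist q_ge] := exists_optimal_maximizer.
by exists p, q, (sup guaranteed_payoff).
Qed.

End MatrixGame.

Section ExtendedMinMax.
Local Open Scope ereal_scope.
Variable R : realType.

Lemma is_min_ereal_inf (A : Type) (S : set A) (F : A -> \bar R) m :
  is_min S F m -> ereal_inf (F @` S) = m.
Proof.
move=> [[a Sa <-] F_ge]; apply/le_anti.
rewrite ereal_inf_lbound /=; last by exists a.
by apply/ereal_infP => _ [b Sb <-]; exact: F_ge.
Qed.

Lemma is_max_ereal_sup (A : Type) (S : set A) (F : A -> \bar R) m :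
  is_max S F m -> ereal_sup (F @` S) = m.
Proof.
move=> [[a Sa <-] F_le]; apply/le_anti.
rewrite ereal_sup_ubound /= ?andbT; last by exists a.
by apply/ereal_supP => _ [b Sb <-]; exact: F_le.
Qed.

Lemma maxmin_intro (A B : Type) (S : set A) (T : set B) (F : A -> B -> \bar R) v :
  (forall a, S a -> exists m, is_min T (F a) m) ->
  (exists2 a, S a & forall b, T b -> v <= F a b) ->
  (forall a, S a -> exists2 b, T b & F a b <= v) ->
  maxmin S T F v.
Proof.
move=> inner [a Sa a_ge] b_le.
have inf_le a' : S a' -> ereal_inf (F a' @` T) <= v.
  move=> Sa'; have [b Tb Fb_le] := b_le a' Sa'.
  by apply: le_trans Fb_le; apply: ereal_inf_lbound; exists b.
split=> [a' Sa'|].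
  by have [m m_min] := inner a' Sa'; rewrite (is_min_ereal_inf m_min).
split=> [|a' Sa']; last exact: inf_le.
exists a => //; apply/le_anti; rewrite inf_le //=.
by apply/ereal_infP => _ [b Tb <-]; exact: a_ge.
Qed.

Lemma minmax_intro (A B : Type) (S : set A) (T : set B) (F : A -> B -> \bar R) v :
  (forall a, S a -> exists m, is_max T (F a) m) ->
  (exists2 a, S a & forall b, T b -> F a b <= v) ->
  (forall a, S a -> exists2 b, T b & v <= F a b) ->
  minmax S T F v.
Proof.
move=> inner [a Sa a_le] b_ge.
have le_sup a' : S a' -> v <= ereal_sup (F a' @` T).
  move=> Sa'; have [b Tb Fb_ge] := b_ge a' Sa'.
  by apply: le_trans Fb_ge _; apply: ereal_sup_ubound; exists b.
split=> [a' Sa'|].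
  by have [m m_max] := inner a' Sa'; rewrite (is_max_ereal_sup m_max).
split=> [|a' Sa']; last exact: le_sup.
exists a => //; apply/le_anti; rewrite le_sup // andbT.
by apply/ereal_supP => _ [b Tb <-]; exact: a_le.
Qed.

End ExtendedMinMax.

Lemma finite_is_min (R : realType) (I : finType) (i0 : I) (F : I -> \bar R) :
  exists m, is_min setT F m.
Proof.
by have [i Fi] := exists_argmin i0 F; exists (F i); split=> [|j _]; [exists i|].
Qed.

Lemma finite_is_max (R : realType) (I : finType) (i0 : I) (F : I -> \bar R) :
  exists m, is_max setT F m.
Proof.
by have [i Fi] := exists_argmax i0 F; exists (F i); split=> [|j _]; [exists i|].
Qed.

Lemma esum_diracM (R : realType) (U : finType) (u : U) (e : U -> \bar R) :
  (\sum_z (dirac u z)%:E * e z)%E = e u.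
Proof.
rewrite (bigD1 u) //= big1 => [|z z_neq]; last by rewrite dirac_neq ?mul0e.
by rewrite /dirac eqxx mul1e adde0.
Qed.

Lemma eratioE (R : realType) (a b : R) : b != 0 -> eratio a b = (a / b)%:E.
Proof. by rewrite /eratio => /negbTE ->. Qed.

Lemma eratio0 (R : realType) (a : R) : eratio a 0 = +oo%E.
Proof. by rewrite /eratio eqxx. Qed.

Section PureStrategies.
Variables (R : realType) (X Y : finType) (G : X -> Y -> R).
Variables (p : X -> R) (q : Y -> R) (v : R).
Hypotheses (p_dist : dist p) (q_dist : dist q).
Hypotheses (q_ge : forall x, v <= \sum_y q y * G x y)
           (p_le : forall y, \sum_x p x * G x y <= v).

Lemma saddle_maxmin_pure : (0 < #|X|)%N ->
  maxmin (@dist R Y) setT (fun q x => (\sum_y q y * G x y)%:E) v%:E.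
Proof.
move=> /card_gt0P[x0 _].
apply: maxmin_intro => [q' _||q' q'_dist]; first exact: finite_is_min x0 _.
  by exists q => // x _; rewrite lee_fin.
have [xm xm_min] := exists_argmin x0 (fun x => \sum_y q' y * G x y).
exists xm => //; rewrite lee_fin; apply: le_trans (le_dist_avg p_dist xm_min) _.
by rewrite sumM_exchange; exact: dist_avg_le.
Qed.

Lemma saddle_minmax_pure : (0 < #|Y|)%N ->
  minmax (@dist R X) setT (fun p y => (\sum_x p x * G x y)%:E) v%:E.
Proof.
move=> /card_gt0P[y0 _].
apply: minmax_intro => [p' _||p' p'_dist]; first exact: finite_is_max y0 _.
  by exists p => // y _; rewrite lee_fin.
have [ym ym_max] := exists_argmax y0 (fun y => \sum_x p' x * G x y).
exists ym => //; rewrite lee_fin; apply: le_trans _ (dist_avg_le q_dist ym_max).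
by rewrite -sumM_exchange; exact: le_dist_avg.
Qed.

End PureStrategies.

(** * The ratio game *)

Section RatioGame.
Variables (R : realType) (X Y : finType) (g : X -> Y -> R) (h : Y -> R).

Definition mean_ratio (q : Y -> R) (x : X) : \bar R :=
  (\sum_y (q y)%:E * eratio (g x y) (h y))%E.

Definition ratio_mean (p : X -> R) (y : Y) : \bar R :=
  eratio (\sum_x p x * g x y) (h y).

Definition ratio_of_means (p : X -> R) (q : Y -> R) : \bar R :=
  eratio (\sum_x \sum_y p x * q y * g x y) (\sum_y q y * h y).

Definition ratio_game_value (v : \bar R) :=
  maxmin (@dist R Y) setT mean_ratio v /\
  minmax (@dist R X) setT ratio_mean v /\
  maxmin (@dist R Y) (@dist R X) (fun q p => ratio_of_means p q) v /\
  minmax (@dist R X) (@dist R Y) ratio_of_means v.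

Hypothesis h_ge0 : forall y, 0 <= h y.

Lemma has_root_or_gt0 : (exists y, h y = 0) \/ (forall y, 0 < h y).
Proof.
have [root|no_root] := pselect (exists y, h y = 0); [by left | right=> y].
by rewrite lt_def h_ge0 andbT; apply/eqP => hy; apply: no_root; exists y.
Qed.

Lemma ratio_of_means_min_attained (x0 : X) q : dist q ->
  exists m, is_min (@dist R X) (ratio_of_means^~ q) m.
Proof.
move=> [q_ge0 q_sum1]; rewrite /ratio_of_means.
have [H0|H_neq0] := eqVneq (\sum_y q y * h y) 0.
  exists +oo%E; split=> [|p _]; last by rewrite H0 eratio0.
  by exists (dirac x0); [exact: dirac_dist | rewrite H0 eratio0].
have H_gt0 : 0 < \sum_y q y * h y.
  by rewrite lt_def H_neq0 sumr_ge0 // => y _; rewrite mulr_ge0.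
have [xm xm_min] := exists_argmin x0 (fun x => \sum_y q y * g x y).
exists ((\sum_y q y * g xm y) / \sum_y q y * h y)%:E; split=> [|p p_dist].
  exists (dirac xm); first exact: dirac_dist.
  by rewrite eratioE // sum_pairM_l sum_diracM.
by rewrite eratioE // sum_pairM_l lee_fin ler_pM2r ?invr_gt0 // le_dist_avg.
Qed.

Lemma ratio_of_means_max_attained (y0 : Y) p :
  exists m, is_max (@dist R Y) (ratio_of_means p) m.
Proof.
rewrite /ratio_of_means; have [[y1 hy1]|h_gt0] := has_root_or_gt0.
  exists +oo%E; split=> [|q _]; last exact: leey.
  by exists (dirac y1); [exact: dirac_dist | rewrite sum_diracM hy1 eratio0].
pose r y := (\sum_x p x * g x y) / h y.
have [ym ym_max] := exists_argmax y0 r.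
exists (r ym)%:E; split=> [|q q_dist].
  exists (dirac ym); first exact: dirac_dist.
  by rewrite sum_diracM eratioE ?gt_eqF // sum_pairM_r sum_diracM.
have H_gt0 := dist_avg_gt0 q_dist h_gt0.
rewrite eratioE ?gt_eqF // lee_fin ler_pdivrMr // sum_pairM_r mulr_sumr.
apply: ler_sum => y _; rewrite mulrCA ler_wpM2l ?q_dist.1 //.
by rewrite -ler_pdivrMr //; exact: ym_max.
Qed.

Lemma ratio_game_value_root y1 : h y1 = 0 ->
  (0 < #|X|)%N -> (0 < #|Y|)%N -> ratio_game_value +oo%E.
Proof.
move=> hy1 /card_gt0P[x0 _] /card_gt0P[y0 _].
have mean_y1 x : mean_ratio (dirac y1) x = +oo%E.
  by rewrite /mean_ratio esum_diracM hy1 eratio0.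
have means_y1 p : ratio_of_means p (dirac y1) = +oo%E.
  by rewrite /ratio_of_means sum_diracM hy1 eratio0.
split; [|split; [|split]].
- apply: maxmin_intro => [q _||q _]; first exact: finite_is_min x0 _.
    by exists (dirac y1) => [|x _]; [exact: dirac_dist | rewrite mean_y1].
  by exists x0 => //; exact: leey.
- apply: minmax_intro => [p _||p _]; first exact: finite_is_max y0 _.
    by exists (dirac x0) => [|y _]; [exact: dirac_dist | exact: leey].
  by exists y1 => //; rewrite /ratio_mean hy1 eratio0.
- apply: maxmin_intro => [q q_dist||q _].
    exact: (ratio_of_means_min_attained x0 q_dist).
    by exists (dirac y1) => [|p _]; [exact: dirac_dist | rewrite means_y1].
  by exists (dirac x0); [exact: dirac_dist | exact: leey].
- apply: minmax_intro => [p _||p _].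
    exact: (ratio_of_means_max_attained y0 p).
    by exists (dirac x0) => [|q _]; [exact: dirac_dist | exact: leey].
  by exists (dirac y1); [exact: dirac_dist | rewrite means_y1].
Qed.

Section PositiveDenominator.
Hypothesis h_gt0 : forall y, 0 < h y.

Lemma mean_ratioE q x : mean_ratio q x = (\sum_y q y * (g x y / h y))%:E.
Proof.
rewrite /mean_ratio -sumEFin; apply: eq_bigr => y _.
by rewrite eratioE ?gt_eqF // EFinM.
Qed.

Lemma ratio_meanE p y : ratio_mean p y = (\sum_x p x * (g x y / h y))%:E.
Proof.
rewrite /ratio_mean eratioE ?gt_eqF // mulr_suml.
by under eq_bigr do rewrite -mulrA.
Qed.

Lemma ratio_of_means_le p q v : dist q ->
  (forall y, \sum_x p x * (g x y / h y) <= v) -> (ratio_of_means p q <= v%:E)%E.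
Proof.
move=> q_dist p_le; have H_gt0 := dist_avg_gt0 q_dist h_gt0.
rewrite /ratio_of_means eratioE ?gt_eqF // lee_fin ler_pdivrMr // sum_pairM_r.
rewrite mulr_sumr; apply: ler_sum => y _; rewrite mulrCA ler_wpM2l ?q_dist.1 //.
rewrite -ler_pdivrMr // mulr_suml.
by under eq_bigr do rewrite -mulrA; exact: p_le.
Qed.

Definition reweight (q : Y -> R) : Y -> R := normalize (fun y => q y / h y).

Lemma sum_weightM q : dist q -> \sum_y q y / h y * h y = 1.
Proof. by case=> _ <-; apply: eq_bigr => y _; rewrite divfK ?gt_eqF. Qed.

Lemma sum_weight_gt0 q : dist q -> 0 < \sum_y q y / h y.
Proof.
move=> q_dist; apply: (@sum_gt0_of_avg_gt0 _ _ _ h) => [y|].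
  by rewrite divr_ge0 ?q_dist.1 ?ltW.
by rewrite sum_weightM.
Qed.

Lemma reweight_dist q : dist q -> dist (reweight q).
Proof.
move=> q_dist; apply: normalize_dist (sum_weight_gt0 q_dist) => y.
by rewrite divr_ge0 ?q_dist.1 ?ltW.
Qed.

Lemma ratio_of_means_reweight p q : dist q ->
  ratio_of_means p (reweight q) = (\sum_x p x * \sum_y q y * (g x y / h y))%:E.
Proof.
move=> q_dist; have W_gt0 := sum_weight_gt0 q_dist.
rewrite /ratio_of_means /reweight sum_pairM_l sum_normalizeM sum_weightM //.
rewrite eratioE ?div1r ?invr_eq0 ?gt_eqF // invrK.
under eq_bigr do rewrite sum_normalizeM mulrA.
rewrite -mulr_suml mulfVK ?gt_eqF //; congr (_%:E); apply: eq_bigr => x _.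
by congr (_ * _); apply: eq_bigr => y _; rewrite mulrAC -mulrA.
Qed.

Lemma ratio_game_value_gt0 : (0 < #|X|)%N -> (0 < #|Y|)%N ->
  exists v, ratio_game_value v.
Proof.
move=> hX hY; have [x0 _] := card_gt0P hX; have [y0 _] := card_gt0P hY.
have [p [q [v [p_dist q_dist q_ge p_le]]]] :=
  matrix_game_saddle (fun x y => g x y / h y) hX hY.
have means_le q' : dist q' -> (ratio_of_means p q' <= v%:E)%E.
  by move=> q'_dist; exact: ratio_of_means_le.
have means_ge p' : dist p' -> (v%:E <= ratio_of_means p' (reweight q))%E.
  by move=> p'_dist; rewrite ratio_of_means_reweight // lee_fin le_dist_avg.
have reweight_q := reweight_dist q_dist.
exists v%:E; split; [|split; [|split]].
- have -> : mean_ratio = fun q x => (\sum_y q y * (g x y / h y))%:E.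
    by apply/funext => q'; apply/funext => x; exact: mean_ratioE.
  exact: (saddle_maxmin_pure p_dist q_dist q_ge p_le hX).
- have -> : ratio_mean = fun p y => (\sum_x p x * (g x y / h y))%:E.
    by apply/funext => p'; apply/funext => y; exact: ratio_meanE.
  exact: (saddle_minmax_pure p_dist q_dist q_ge p_le hY).
- apply: maxmin_intro => [q' q'_dist||q' q'_dist].
  + exact: (ratio_of_means_min_attained x0 q'_dist).
  + by exists (reweight q).
  + by exists p => //; exact: means_le.
- apply: minmax_intro => [p' _||p' p'_dist].
  + exact: (ratio_of_means_max_attained y0 p').
  + by exists p => // q' q'_dist; exact: means_le.
  + by exists (reweight q) => //; exact: means_ge.
Qed.

End PositiveDenominator.

End RatioGame.

Theorem theorem9 (R : realType) (X Y : finType)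
  (hX : (0 < #|X|)%N) (hY : (0 < #|Y|)%N)
  (g : X -> Y -> R) (h : Y -> R)
  (g_pos : forall x y, 0 < g x y) (h_ge0 : forall y, 0 <= h y) :
  exists v : \bar R,
    (* max_q min_x E[g(x,Y)/h(Y)] *)
    maxmin (@dist R Y) setT
      (fun q x => (\sum_(y : Y) (q y)%:E * eratio (g x y) (h y))%E) v /\
    (* min_p max_y E[g(X,y)] / h(y) *)
    minmax (@dist R X) setT
      (fun p y => eratio (\sum_(x : X) p x * g x y) (h y)) v /\
    (* max_q min_p E[g(X,Y)] / E[h(Y)] *)
    maxmin (@dist R Y) (@dist R X)
      (fun q p => eratio (\sum_(x : X) \sum_(y : Y) p x * q y * g x y)
                         (\sum_(y : Y) q y * h y)) v /\
    (* min_p max_q E[g(X,Y)] / E[h(Y)] *)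
    minmax (@dist R X) (@dist R Y)
      (fun p q => eratio (\sum_(x : X) \sum_(y : Y) p x * q y * g x y)
                         (\sum_(y : Y) q y * h y)) v.
Proof.
have [[y1 hy1]|h_gt0] := has_root_or_gt0 h_ge0.
  by exists +oo%E; exact: ratio_game_value_root hy1 hX hY.
exact: ratio_game_value_gt0 h_gt0 hX hY.
Qed.
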